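(* Assume $f$ is in Case 4. For every $0<l<\alpha$ there exist positive numbers $r_1,r_2$, which can be taken arbitrarily small, such that $f(U^{l,+}_{r_1,r_2})\subset U^{l,+}_{r_1,r_2}$, where $U^{l,+}_{r_1,r_2}=\{|z|<r_1,\ |w|<r_2|z|^l\}$.
   Context: Let $f(z,w)=(p(z),q(z,w))$ be a holomorphic skew product defined near the origin of $\mathbb{C}^2$ with $p(z)=az^{\delta}+O(z^{\delta+1})$, $a\neq0$, $\delta\ge2$, and $q(z,w)=\sum_{i,j\ge0}b_{ij}z^iw^j$ with $b_{00}=b_{01}=0$. The Newton polygon $N(q)$ is the convex hull of $\bigcup_{b_{ij}\ne0}\{(x,y):x\ge i,\ y\ge j\}$, with vertices $(n_1,m_1),\dots,(n_s,m_s)$, $n_1<\dots<n_s$, $m_1>\dots>m_s$. For $1\le k\le s-1$, $T_k$ is the $y$-intercept of the line through $(n_k,m_k)$ and $(n_{k+1},m_{k+1})$. Case 4 means $s>2$ and $T_k\le\delta\le T_{k-1}$ for some $2\le k\le s-1$; then set $(\gamma,d)=(n_k,m_k)$ (so $\gamma>0$, $\delta>d\ge1$) and $\alpha=\gamma/(\delta-d)$. *)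

From Stdlib Require Import Reals.
From Coquelicot Require Import Coquelicot.
Open Scope R_scope.

Definition CSeries (u : nat -> C) : C :=
  (Series (fun n => Re (u n)), Series (fun n => Im (u n))).

Definition pval (a : nat -> C) (z : C) : C :=
  CSeries (fun n => (a n * Cpow z n)%C).

Definition qval (b : nat -> nat -> C) (z w : C) : C :=
  CSeries (fun i => CSeries (fun j => (b i j * Cpow z i * Cpow w j)%C)).

(* p is holomorphic near 0: its power series converges absolutely on some disk *)
Definition conv1 (a : nat -> C) : Prop :=
  exists rho, 0 < rho /\ ex_series (fun n => Cmod (a n) * rho ^ n).

(* q is holomorphic near (0,0): its double power series converges absolutely
   on some polydisk *)
Definition conv2 (b : nat -> nat -> C) : Prop :=
  exists rho, 0 < rho /\
    (forall i, ex_series (fun j => Cmod (b i j) * rho ^ i * rho ^ j)) /\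
    ex_series (fun i => Series (fun j => Cmod (b i j) * rho ^ i * rho ^ j)).

(* Newton polygon N(q): convex hull of the union over b_ij <> 0 of the
   quadrants {(x,y) : x >= i, y >= j}. *)
Definition in_quadrants (b : nat -> nat -> C) (x y : R) : Prop :=
  exists i j : nat, b i j <> 0%C /\ INR i <= x /\ INR j <= y.

Definition newton_polygon (b : nat -> nat -> C) (x y : R) : Prop :=
  exists (n : nat) (lam px py : nat -> R),
    (forall k, (k < n)%nat -> 0 <= lam k /\ in_quadrants b (px k) (py k)) /\
    sum_f_R0 lam (pred n) = 1 /\ (0 < n)%nat /\
    x = sum_f_R0 (fun k => lam k * px k) (pred n) /\
    y = sum_f_R0 (fun k => lam k * py k) (pred n).

Definition is_vertex (b : nat -> nat -> C) (x y : R) : Prop :=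
  newton_polygon b x y /\
  forall x1 y1 x2 y2, newton_polygon b x1 y1 -> newton_polygon b x2 y2 ->
    x = (x1 + x2) / 2 -> y = (y1 + y2) / 2 -> x1 = x2 /\ y1 = y2.

Definition y_intercept (x1 y1 x2 y2 : R) : R :=
  y1 - x1 * (y2 - y1) / (x2 - x1).

(* Case 4 with distinguished vertex (gamma,d) = (n_k, m_k), 2 <= k <= s-1:
   (n_{k-1},m_{k-1}) and (n_{k+1},m_{k+1}) are the vertices immediately to the
   left and to the right of (n_k,m_k) (vertices are ordered by abscissa), and
   T_k <= delta <= T_{k-1}. *)
Definition case4_vertex (b : nat -> nat -> C) (delta gamma d : nat) : Prop :=
  is_vertex b (INR gamma) (INR d) /\
  exists x0 y0 x2 y2 : R,
    is_vertex b x0 y0 /\ x0 < INR gamma /\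
    (forall x y, is_vertex b x y -> ~ (x0 < x < INR gamma)) /\
    is_vertex b x2 y2 /\ INR gamma < x2 /\
    (forall x y, is_vertex b x y -> ~ (INR gamma < x < x2)) /\
    y_intercept (INR gamma) (INR d) x2 y2 <= INR delta /\
    INR delta <= y_intercept x0 y0 (INR gamma) (INR d).

Definition rpow (x l : R) : R := if Req_EM_T x 0 then 0 else Rpower x l.

Definition U_plus (l r1 r2 : R) (z w : C) : Prop :=
  Cmod z < r1 /\ Cmod w < r2 * rpow (Cmod z) l.

From Stdlib Require Import Reals Lra Lia Psatz List Classical.
From Coquelicot Require Import Coquelicot.
Open Scope R_scope.

(* With alpha = gamma / (delta - d), the line x + alpha y = alpha delta passes through (gamma, d)
   and (0, delta), and in Case 4 it supports the Newton polygon: every monomial z^i w^j of q has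
   i >= alpha (delta - j).  Otherwise the leftmost minimiser of x + alpha y over the support of q
   would be a vertex of N(q) strictly below that line; wherever its abscissa lies relative to the
   neighbours of (gamma, d), it contradicts either their adjacency or their being vertices.
   On U^{l,+} put tau = |z|/rho and sigma = |w|/rho <= tau^l.  A monomial of q is then at most
   sigma^delta when j >= delta and tau^(l delta) tau^(alpha - l) when j < delta, whereas
   |p(z)|^l >= (|a_delta|/2)^l |z|^(l delta).  Choosing r2 small controls the first kind of term
   against r2 |p(z)|^l; then choosing r1 small controls the second one through the spare factor
   tau^(alpha - l).  Finally |p(z)| < r1 because delta >= 2. *)

(** * The Newton polygon *)

Lemma sum_weighted_affine (lam f g : nat -> R) (c1 c2 c3 : R) (N : nat) :
  sum_f_R0 (fun k => lam k * (c1 * f k + c2 * g k + c3)) N =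
  c1 * sum_f_R0 (fun k => lam k * f k) N + c2 * sum_f_R0 (fun k => lam k * g k) N
  + c3 * sum_f_R0 lam N.
Proof. induction N as [|N IH]; simpl; [|rewrite IH]; ring. Qed.

Lemma convex_comb_ge (lam v : nat -> R) (c : R) (N : nat) :
  sum_f_R0 lam N = 1 -> (forall k, (k <= N)%nat -> lam k * c <= lam k * v k) ->
  c <= sum_f_R0 (fun k => lam k * v k) N.
Proof.
  intros Hsum Hk. rewrite <- (Rmult_1_r c), <- Hsum, scal_sum.
  apply sum_Rle. exact Hk.
Qed.

Lemma sum_nonneg_eq0 (f : nat -> R) (N : nat) :
  (forall k, (k <= N)%nat -> 0 <= f k) -> sum_f_R0 f N = 0 ->
  forall k, (k <= N)%nat -> f k = 0.
Proof.
  induction N as [|N IH]; intros Hpos Hsum k Hk; simpl in Hsum.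
  - replace k with 0%nat by lia. exact Hsum.
  - assert (Hprefix : 0 <= sum_f_R0 f N).
    { rewrite <- (sum_eq_R0 (fun _ => 0) N) by auto.
      apply sum_Rle. intros n Hn. apply Hpos. lia. }
    assert (Hlast : 0 <= f (S N)) by (apply Hpos; lia).
    destruct (Nat.eq_dec k (S N)) as [->|Hne]; [lra|].
    apply IH; [intros n Hn; apply Hpos; lia|lra|lia].
Qed.

Lemma newton_polygon_ge (b : nat -> nat -> C) (c a1 a2 x y : R) :
  0 <= a1 -> 0 <= a2 ->
  (forall i j, b i j <> 0%C -> c <= a1 * INR i + a2 * INR j) ->
  newton_polygon b x y -> c <= a1 * x + a2 * y.
Proof.
  intros Ha1 Ha2 Hsupp (n & lam & px & py & Hk & Hsum & Hn & -> & ->).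
  pose proof (sum_weighted_affine lam px py a1 a2 0 (pred n)) as E.
  rewrite Rmult_0_l, Rplus_0_r in E. rewrite <- E.
  apply convex_comb_ge; [exact Hsum|]. intros k Hk'.
  destruct (Hk k ltac:(lia)) as (Hl & i & j & Hb & Hi & Hj).
  specialize (Hsupp i j Hb).
  apply Rmult_le_compat_l; [exact Hl|]. nra.
Qed.

Lemma newton_polygon_support (b : nat -> nat -> C) (i j : nat) :
  b i j <> 0%C -> newton_polygon b (INR i) (INR j).
Proof.
  intros Hb. exists 1%nat, (fun _ => 1), (fun _ => INR i), (fun _ => INR j).
  repeat split; simpl; try lra; try lia. exists i, j. repeat split; auto; lra.
Qed.

Lemma newton_polygon_up (b : nat -> nat -> C) (x y h1 h2 : R) :
  newton_polygon b x y -> 0 <= h1 -> 0 <= h2 -> newton_polygon b (x + h1) (y + h2).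
Proof.
  intros (n & lam & px & py & Hk & Hsum & Hn & Hx & Hy) Hh1 Hh2.
  exists n, lam, (fun k => px k + h1), (fun k => py k + h2).
  split; [|split; [exact Hsum|split; [exact Hn|split]]].
  - intros k Hk'. destruct (Hk k Hk') as (Hl & i & j & Hb & Hi & Hj).
    split; [exact Hl|]. exists i, j. repeat split; auto; lra.
  - rewrite Hx, (sum_eq (fun k => lam k * (px k + h1))
                         (fun k => lam k * (1 * px k + 0 * py k + h1))) by (intros; ring).
    rewrite sum_weighted_affine, Hsum. ring.
  - rewrite Hy, (sum_eq (fun k => lam k * (py k + h2))
                         (fun k => lam k * (0 * px k + 1 * py k + h2))) by (intros; ring).
    rewrite sum_weighted_affine, Hsum. ring.
Qed.

Lemma newton_polygon_mix_support (b : nat -> nat -> C) (i j : nat) (x y mu : R) :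
  b i j <> 0%C -> newton_polygon b x y -> 0 <= mu <= 1 ->
  newton_polygon b (mu * INR i + (1 - mu) * x) (mu * INR j + (1 - mu) * y).
Proof.
  intros Hb (n & lam & px & py & Hk & Hsum & Hn & Hx & Hy) Hmu.
  destruct n as [|m]; [lia|]. simpl pred in Hsum, Hx, Hy.
  exists (S (S m)), (fun k => if (k <? S m)%nat then (1 - mu) * lam k else mu),
    (fun k => if (k <? S m)%nat then px k else INR i),
    (fun k => if (k <? S m)%nat then py k else INR j).
  assert (Hold : forall k, (k <= m)%nat -> (k <? S m)%nat = true)
    by (intros k Hkm; apply Nat.ltb_lt; lia).
  simpl pred. rewrite !tech5, !Nat.ltb_irrefl.
  split; [|split; [|split; [lia|split]]].
  - intros k Hk'. destruct (k <? S m)%nat eqn:E.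
    + apply Nat.ltb_lt in E. destruct (Hk k E) as (Hl & Hq).
      split; [apply Rmult_le_pos; lra|exact Hq].
    + split; [lra|]. exists i, j. repeat split; auto; lra.
  - rewrite (sum_eq _ (fun k => lam k * (1 - mu)))
      by (intros k Hkm; rewrite Hold by exact Hkm; ring).
    rewrite <- scal_sum, Hsum. ring.
  - rewrite (sum_eq _ (fun k => lam k * px k * (1 - mu)))
      by (intros k Hkm; rewrite Hold by exact Hkm; ring).
    rewrite <- scal_sum, Hx. ring.
  - rewrite (sum_eq _ (fun k => lam k * py k * (1 - mu)))
      by (intros k Hkm; rewrite Hold by exact Hkm; ring).
    rewrite <- scal_sum, Hy. ring.
Qed.

Lemma vertex_lowest (b : nat -> nat -> C) (x y1 y : R) :
  newton_polygon b x y1 -> y1 < y -> ~ is_vertex b x y.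
Proof.
  intros Hn Hlt [_ Hext].
  pose proof (newton_polygon_up b x y1 0 0 Hn ltac:(lra) ltac:(lra)) as Hlow.
  pose proof (newton_polygon_up b x y1 0 (2 * (y - y1)) Hn ltac:(lra) ltac:(lra)) as Hhigh.
  destruct (Hext _ _ _ _ Hlow Hhigh) as [_ Heq]; [field|field|lra].
Qed.

Lemma vertex_not_above_chord (b : nat -> nat -> C) (al : R) (qi qj : nat)
    (xg yg xv yv mu : R) :
  0 < al -> b qi qj <> 0%C -> newton_polygon b xg yg ->
  INR qi + al * INR qj < xg + al * yg -> xg + al * yg <= xv + al * yv ->
  0 < mu <= 1 -> xv = mu * INR qi + (1 - mu) * xg -> ~ is_vertex b xv yv.
Proof.
  intros Hal Hq Hg HQG HGV Hmu Hxv. rewrite Hxv.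
  apply vertex_lowest with (mu * INR qj + (1 - mu) * yg);
    [apply newton_polygon_mix_support; auto; lra|].
  apply Rmult_lt_reg_l with al; [exact Hal|]. nra.
Qed.

Definition support_leftmost_min (b : nat -> nat -> C) (al : R) (qi qj : nat) : Prop :=
  b qi qj <> 0%C /\
  (forall i j, b i j <> 0%C -> INR qi + al * INR qj <= INR i + al * INR j) /\
  (forall i j, b i j <> 0%C -> INR i + al * INR j = INR qi + al * INR qj -> (qi <= i)%nat).

Lemma list_min {A : Type} (le : A -> A -> Prop) (P : A -> Prop) (l : list A) :
  (forall x y, le x y \/ le y x) -> (forall x y z, le x y -> le y z -> le x z) ->
  (exists x, In x l /\ P x) ->
  exists m, In m l /\ P m /\ forall y, In y l -> P y -> le m y.
Proof.
  intros Htot Htr. induction l as [|a l IH]; intros (x & Hx & Px); [destruct Hx|].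
  assert (Hrefl : le a a) by (destruct (Htot a a); auto).
  destruct (classic (exists y, In y l /\ P y)) as [Hl|Hl].
  - destruct (IH Hl) as (m & Hm & Pm & Hmin).
    destruct (classic (P a /\ le a m)) as [[Pa Ham]|Ha].
    + exists a. split; [left; auto|split; [exact Pa|]].
      intros y [<-|Hy] Py; [exact Hrefl|eauto].
    + exists m. split; [right; exact Hm|split; [exact Pm|]].
      intros y [<-|Hy] Py; [|auto].
      destruct (Htot m a); [auto|exfalso; auto].
  - exists a. destruct Hx as [<-|Hx]; [|exfalso; eauto].
    split; [left; auto|split; [exact Px|]].
    intros y [<-|Hy] Py; [exact Hrefl|exfalso; eauto].
Qed.

Lemma support_leftmost_min_exists (b : nat -> nat -> C) (al : R) :
  0 < al -> (exists i j, b i j <> 0%C) -> exists qi qj, support_leftmost_min b al qi qj.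
Proof.
  intros Hal (pi & pj & Hp).
  set (phi := fun q : nat * nat => INR (fst q) + al * INR (snd q)).
  set (lex := fun q q' => phi q < phi q' \/ (phi q = phi q' /\ (fst q <= fst q')%nat)).
  destruct (INR_archimed (Rmin 1 al) (phi (pi, pj))) as [N HN];
    [apply Rmin_case; lra|].
  set (box := list_prod (seq 0 (S N)) (seq 0 (S N))).
  assert (Hbox : forall q, phi q <= phi (pi, pj) -> In q box).
  { intros [i j] Hq. unfold phi in *; simpl in Hq.
    pose proof (Rmin_l 1 al). pose proof (Rmin_r 1 al). pose proof (pos_INR i).
    pose proof (pos_INR j). pose proof (pos_INR N).
    simpl in HN. apply in_prod_iff. split; apply in_seq; split; try lia.
    - cut (INR i < INR (S N)); [intros Hlt; apply INR_lt in Hlt; lia|rewrite S_INR; nra].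
    - cut (INR j < INR (S N)); [intros Hlt; apply INR_lt in Hlt; lia|rewrite S_INR; nra]. }
  destruct (list_min lex (fun q => b (fst q) (snd q) <> 0%C) box) as ([qi qj] & _ & Hq & Hmin).
  - intros q q'. unfold lex.
    destruct (Rtotal_order (phi q) (phi q')) as [|[|]]; [left; left; auto| |right; left; auto].
    destruct (Nat.le_gt_cases (fst q) (fst q')); [left|right]; right; split; auto; lia.
  - intros q q' q'' [|[]] [|[]]; unfold lex;
      [left; lra|left; lra|left; lra|right; split; [lra|lia]].
  - exists (pi, pj). split; [apply Hbox; lra|exact Hp].
  - assert (Hlex : forall i j, b i j <> 0%C -> lex (qi, qj) (i, j)).
    { intros i j Hb. destruct (classic (In (i, j) box)) as [Hij|Hij]; [exact (Hmin _ Hij Hb)|].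
      assert (phi (pi, pj) < phi (i, j)) by (apply Rnot_le_lt; intro; apply Hij, Hbox; auto).
      destruct (Hmin (pi, pj) ltac:(apply Hbox; lra) Hp) as [|[]]; left; lra. }
    exists qi, qj. split; [exact Hq|split].
    + intros i j Hb. destruct (Hlex i j Hb) as [|[]]; unfold phi in *; simpl in *; lra.
    + intros i j Hb Heq. destruct (Hlex i j Hb) as [|[]]; unfold phi in *; simpl in *; [lra|auto].
Qed.

Lemma leftmost_min_face_ge (b : nat -> nat -> C) (al : R) (qi qj : nat) (x y : R) :
  0 < al -> support_leftmost_min b al qi qj -> newton_polygon b x y ->
  x + al * y = INR qi + al * INR qj -> INR qi <= x.
Proof.
  intros Hal (_ & Hmin & Hleft) (n & lam & px & py & Hk & Hsum & Hn & Hx & Hy) Hface.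
  set (m := INR qi + al * INR qj) in *.
  assert (Habove : forall k, (k < n)%nat -> m <= px k + al * py k).
  { intros k Hk'. destruct (Hk k Hk') as (_ & i & j & Hb & Hi & Hj).
    specialize (Hmin i j Hb). nra. }
  (* The combination has value [m], so each point of positive weight lies on the line *)
  assert (Hon : forall k, (k <= pred n)%nat -> lam k * (1 * px k + al * py k + - m) = 0).
  { apply sum_nonneg_eq0.
    - intros k Hk'. destruct (Hk k ltac:(lia)) as [Hl _].
      specialize (Habove k ltac:(lia)). nra.
    - rewrite sum_weighted_affine, Hsum, <- Hx, <- Hy. lra. }
  rewrite Hx. apply convex_comb_ge; [exact Hsum|]. intros k Hk'.
  destruct (Hk k ltac:(lia)) as (Hl & i & j & Hb & Hi & Hj).
  destruct (Req_dec (lam k) 0) as [->|Hl0]; [lra|].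
  apply Rmult_le_compat_l; [exact Hl|].
  assert (Hv : px k + al * py k = m).
  { specialize (Hon k Hk'). apply Rmult_integral in Hon. lra. }
  assert (Hij : INR i + al * INR j = m) by (specialize (Hmin i j Hb); nra).
  pose proof (le_INR _ _ (Hleft i j Hb Hij)). lra.
Qed.

Lemma leftmost_min_is_vertex (b : nat -> nat -> C) (al : R) (qi qj : nat) :
  0 < al -> support_leftmost_min b al qi qj -> is_vertex b (INR qi) (INR qj).
Proof.
  intros Hal HQ. pose proof HQ as (Hq & Hmin & _).
  split; [exact (newton_polygon_support b qi qj Hq)|].
  intros x1 y1 x2 y2 N1 N2 Ex Ey.
  assert (Hge : forall x y, newton_polygon b x y -> INR qi + al * INR qj <= 1 * x + al * y)
    by (intros x y; apply newton_polygon_ge; try lra; intros i j Hb; rewrite Rmult_1_l; auto).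
  pose proof (Hge _ _ N1). pose proof (Hge _ _ N2).
  assert (Hmid : al * INR qj = (al * y1 + al * y2) / 2) by (rewrite Ey; field).
  assert (E1 : x1 + al * y1 = INR qi + al * INR qj) by lra.
  assert (E2 : x2 + al * y2 = INR qi + al * INR qj) by lra.
  pose proof (leftmost_min_face_ge b al qi qj x1 y1 Hal HQ N1 E1).
  pose proof (leftmost_min_face_ge b al qi qj x2 y2 Hal HQ N2 E2).
  assert (x1 = x2) by lra. split; [assumption|].
  apply Rmult_eq_reg_l with al; lra.
Qed.

Lemma left_neighbour_above_line (x0 y0 g dd dl al : R) :
  x0 < g -> 0 < dl - dd -> g = al * (dl - dd) ->
  dl <= y_intercept x0 y0 g dd -> al * dl <= x0 + al * y0.
Proof.
  unfold y_intercept. intros Hx0 Hd Hg Hint.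
  assert (E : x0 * (dd - y0) / (g - x0) * (g - x0) = x0 * (dd - y0)) by (field; lra).
  assert (dl * (g - x0) <= y0 * (g - x0) - x0 * (dd - y0)) by nra.
  apply Rmult_le_reg_l with (dl - dd); [exact Hd|]. nra.
Qed.

Lemma right_neighbour_above_line (x2 y2 g dd dl al : R) :
  g < x2 -> 0 < dl - dd -> g = al * (dl - dd) ->
  y_intercept g dd x2 y2 <= dl -> al * dl <= x2 + al * y2.
Proof.
  unfold y_intercept. intros Hx2 Hd Hg Hint.
  assert (E : g * (y2 - dd) / (x2 - g) * (x2 - g) = g * (y2 - dd)) by (field; lra).
  assert (dd * (x2 - g) - g * (y2 - dd) <= dl * (x2 - g)) by nra.
  apply Rmult_le_reg_l with (dl - dd); [exact Hd|]. nra.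
Qed.

Lemma pos_of_div_pos (g D : R) : 0 <= g -> 0 < g / D -> 0 < D.
Proof.
  intros Hg H. destruct (Rtotal_order D 0) as [Hneg|[Hzero|Hpos]]; [|subst D|exact Hpos].
  - assert (/ D < 0) by (apply Rinv_lt_0_compat; exact Hneg). unfold Rdiv in H. nra.
  - unfold Rdiv in H. rewrite Rinv_0, Rmult_0_r in H. lra.
Qed.

Lemma case4_supporting_line (b : nat -> nat -> C) (delta gamma d : nat) :
  case4_vertex b delta gamma d -> 0 < INR gamma / (INR delta - INR d) ->
  forall i j, b i j <> 0%C -> INR gamma / (INR delta - INR d) * (INR delta - INR j) <= INR i.
Proof.
  intros (HG & x0 & y0 & x2 & y2 & HL & Hx0 & HnoL & HR & Hx2 & HnoR & HT1 & HT2) Hal i j Hb.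
  set (al := INR gamma / (INR delta - INR d)) in *.
  assert (HD : 0 < INR delta - INR d) by exact (pos_of_div_pos _ _ (pos_INR gamma) Hal).
  assert (Hg : INR gamma = al * (INR delta - INR d)) by (unfold al; field; lra).
  pose proof (left_neighbour_above_line x0 y0 _ _ _ al Hx0 HD Hg HT2) as HL_above.
  pose proof (right_neighbour_above_line x2 y2 _ _ _ al Hx2 HD Hg HT1) as HR_above.
  cut (al * INR delta <= INR i + al * INR j); [lra|].
  apply Rnot_lt_le. intros Hbelow.
  destruct (support_leftmost_min_exists b al Hal (ex_intro _ i (ex_intro _ j Hb)))
    as (qi & qj & HQ).
  pose proof (leftmost_min_is_vertex b al qi qj Hal HQ) as HQv.
  destruct HQ as (Hq & Hmin & _).
  assert (HQG : INR qi + al * INR qj < INR gamma + al * INR d)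
    by (specialize (Hmin i j Hb); lra).
  pose proof (proj1 HG) as HGN.
  destruct (Rle_lt_dec (INR qi) x0) as [HQx0|Hx0Q].
  - apply (vertex_not_above_chord b al qi qj (INR gamma) (INR d) x0 y0
      ((INR gamma - x0) / (INR gamma - INR qi)) Hal Hq HGN HQG ltac:(lra)); [|field; lra|exact HL].
    split; [apply Rdiv_lt_0_compat; lra|].
    apply Rmult_le_reg_r with (INR gamma - INR qi); [lra|]. field_simplify; lra.
  - destruct (Rlt_le_dec (INR qi) (INR gamma)) as [HQg|HgQ];
      [exact (HnoL _ _ HQv (conj Hx0Q HQg))|].
    destruct (Rle_lt_or_eq_dec _ _ HgQ) as [HgQ'|HQeq].
    + destruct (Rlt_le_dec (INR qi) x2) as [HQx2|Hx2Q]; [exact (HnoR _ _ HQv (conj HgQ' HQx2))|].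
      apply (vertex_not_above_chord b al qi qj (INR gamma) (INR d) x2 y2
        ((x2 - INR gamma) / (INR qi - INR gamma)) Hal Hq HGN HQG ltac:(lra));
        [|field; lra|exact HR].
      split; [apply Rdiv_lt_0_compat; lra|].
      apply Rmult_le_reg_r with (INR qi - INR gamma); [lra|]. field_simplify; lra.
    + apply (vertex_lowest b (INR gamma) (INR qj) (INR d));
        [|apply Rmult_lt_reg_l with al; lra|exact HG].
      rewrite HQeq. exact (newton_polygon_support b qi qj Hq).
Qed.

(** * Real powers and the filter [at_right 0] *)

Lemma pow_le_pow_exponent (x : R) (n m : nat) : 0 <= x <= 1 -> (n <= m)%nat -> x ^ m <= x ^ n.
Proof.
  intros Hx Hnm. replace m with (n + (m - n))%nat by lia. rewrite pow_add.
  rewrite <- (Rmult_1_r (x ^ n)) at 2. apply Rmult_le_compat_l; [apply pow_le; lra|].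
  rewrite <- (pow1 (m - n)). apply pow_incr. lra.
Qed.

Lemma pow_scale (x y : R) (n : nat) : 0 < y -> x ^ n = y ^ n * (x / y) ^ n.
Proof. intros Hy. rewrite <- Rpow_mult_distr. f_equal. field. lra. Qed.

Lemma Rpower_gt_0 (x e : R) : 0 < Rpower x e.
Proof. apply exp_pos. Qed.

Lemma Rpower_le_1 (x e : R) : 0 < x <= 1 -> 0 <= e -> Rpower x e <= 1.
Proof.
  intros Hx He.
  assert (E : Rpower 1 e = 1) by (unfold Rpower; rewrite ln_1, Rmult_0_r; apply exp_0).
  rewrite <- E. apply Rle_Rpower_l; assumption.
Qed.

Lemma Rpower_le_exponent (x e1 e2 : R) : 0 < x <= 1 -> e1 <= e2 -> Rpower x e2 <= Rpower x e1.
Proof.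
  intros Hx He. replace e2 with (e1 + (e2 - e1)) by ring. rewrite Rpower_plus.
  pose proof (Rpower_le_1 x (e2 - e1) Hx ltac:(lra)). pose proof (Rpower_gt_0 x e1). nra.
Qed.

Lemma Rpower_pow_comm (x l : R) (n : nat) : 0 < x -> Rpower (x ^ n) l = Rpower x l ^ n.
Proof.
  intros Hx. rewrite <- (Rpower_pow n x), <- (Rpower_pow n (Rpower x l))
    by (apply Rpower_gt_0 || exact Hx).
  rewrite !Rpower_mult. f_equal. ring.
Qed.

Lemma mul_pow_lt (c t r : R) (n : nat) :
  0 <= c -> 0 <= t < r -> r <= 1 -> c * r <= 1 -> (2 <= n)%nat -> c * t ^ n < r.
Proof.
  intros Hc Ht Hr Hcr Hn.
  assert (Htn : c * t ^ n <= c * (t * t))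
    by (apply Rmult_le_compat_l; [exact Hc|]; replace (t * t) with (t ^ 2) by ring;
        apply pow_le_pow_exponent; [lra|exact Hn]).
  assert (c * (t * t) <= c * r * t) by (rewrite <- Rmult_assoc; apply Rmult_le_compat_r; nra).
  assert (c * r * t <= t) by (rewrite <- (Rmult_1_l t) at 2; apply Rmult_le_compat_r; lra).
  lra.
Qed.

Lemma at_right_0_intro (P : R -> Prop) (r0 : R) :
  0 < r0 -> (forall r, 0 < r < r0 -> P r) -> at_right 0 P.
Proof.
  intros Hr0 HP. exists (mkposreal r0 Hr0). intros r Hball Hr. apply HP. split; [exact Hr|].
  change (Rabs (r - 0) < r0) in Hball. rewrite Rminus_0_r, Rabs_pos_eq in Hball; lra.
Qed.

Lemma at_right_0_witness (P : R -> Prop) : at_right 0 P -> exists r, 0 < r /\ P r.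
Proof.
  intros HP. apply (filter_ex (F := at_right 0)). apply filter_and; [|exact HP].
  apply (at_right_0_intro _ 1); [lra|]. intros r Hr. lra.
Qed.

Lemma at_right_0_le (c : R) : 0 < c -> at_right 0 (fun r => r <= c).
Proof. intros Hc. apply (at_right_0_intro _ c Hc). intros r Hr. lra. Qed.

Lemma at_right_0_Rpower_le (rho e K : R) :
  0 < rho -> 0 < e -> 0 < K -> at_right 0 (fun r => Rpower (r / rho) e <= K).
Proof.
  intros Hrho He HK. apply (at_right_0_intro _ (rho * Rpower K (/ e))).
  { apply Rmult_lt_0_compat; [exact Hrho|apply exp_pos]. }
  intros r Hr. left.
  replace K with (Rpower (Rpower K (/ e)) e)
    by (rewrite Rpower_mult, Rinv_l, Rpower_1; lra).
  apply Rlt_Rpower_l; [exact He|]. split; [apply Rdiv_lt_0_compat; lra|].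
  apply Rmult_lt_reg_r with rho; [exact Hrho|]. field_simplify; lra.
Qed.

(** * Estimates on the power series *)

Lemma Series_nonneg (v : nat -> R) : (forall n, 0 <= v n) -> ex_series v -> 0 <= Series v.
Proof.
  intros Hv Hex. rewrite <- (Rmult_0_l (Series v)), <- Series_scal_l.
  apply Series_le; [|exact Hex]. intros n. specialize (Hv n). lra.
Qed.

Lemma ex_series_Rabs_le (w v : nat -> R) :
  (forall n, Rabs (w n) <= v n) -> ex_series v -> ex_series w.
Proof. apply (@ex_series_le R_AbsRing R_CompleteNormedModule). Qed.

Lemma Rabs_Im_le_Cmod (z : C) : Rabs (Im z) <= Cmod z.
Proof.
  destruct z as [x y]. unfold Cmod, Im. simpl.
  rewrite <- sqrt_Rsqr_abs. apply sqrt_le_1_alt. unfold Rsqr. nra.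
Qed.

Lemma ex_series_Re_Im (u : nat -> C) (v : nat -> R) :
  (forall n, Cmod (u n) <= v n) -> ex_series v ->
  ex_series (fun n => Re (u n)) /\ ex_series (fun n => Im (u n)).
Proof.
  intros Huv Hv. split; apply (ex_series_Rabs_le _ v); try exact Hv; intros n.
  - eapply Rle_trans; [apply re_le_Cmod|apply Huv].
  - eapply Rle_trans; [apply Rabs_Im_le_Cmod|apply Huv].
Qed.

Lemma Rabs_dot_le_Cmod (c s : R) (z : C) :
  c ^ 2 + s ^ 2 <= 1 -> Rabs (c * Re z + s * Im z) <= Cmod z.
Proof.
  intros Hcs. pose proof (Cmod2_alt z) as Hm.
  rewrite <- (Rabs_pos_eq (Cmod z)) by apply Cmod_ge_0.
  apply Rsqr_le_abs_0. unfold Rsqr.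
  pose proof (pow2_ge_0 (c * Im z - s * Re z)). nra.
Qed.

Lemma Cmod_CSeries_le (u : nat -> C) (v : nat -> R) :
  (forall n, Cmod (u n) <= v n) -> ex_series v -> Cmod (CSeries u) <= Series v.
Proof.
  intros Huv Hv.
  destruct (ex_series_Re_Im u v Huv Hv) as [HRe HIm].
  assert (Hdot : forall c s, c ^ 2 + s ^ 2 <= 1 ->
    c * Re (CSeries u) + s * Im (CSeries u) <= Series v).
  { intros c s Hcs.
    set (w := fun n => c * Re (u n) + s * Im (u n)).
    assert (Hw : forall n, Rabs (w n) <= v n)
      by (intros n; eapply Rle_trans; [apply Rabs_dot_le_Cmod, Hcs|apply Huv]).
    replace (c * Re (CSeries u) + s * Im (CSeries u)) with (Series w).
    2:{ unfold w. rewrite Series_plus, !Series_scal_l; [reflexivity| |];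
        apply (ex_series_scal_l (V := R_NormedModule)); assumption. }
    eapply Rle_trans; [apply Rle_abs|].
    eapply Rle_trans; [apply Series_Rabs|].
    - apply (ex_series_Rabs_le _ v); [|exact Hv]. intros n. rewrite Rabs_Rabsolu. apply Hw.
    - apply Series_le; [|exact Hv]. intros n. split; [apply Rabs_pos|apply Hw]. }
  set (m := Cmod (CSeries u)). set (A := Re (CSeries u)) in *. set (B := Im (CSeries u)) in *.
  assert (Hm : m ^ 2 = A ^ 2 + B ^ 2) by apply Cmod2_alt.
  (* [m] is the projection of [(A, B)] on the unit vector [(A, B) / m]. *)
  destruct (Req_dec m 0) as [Hm0|Hm0].
  - rewrite Hm0. specialize (Hdot 0 0 ltac:(lra)). lra.
  - assert (Hproj : A / m * A + B / m * B = m).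
    { unfold Rdiv. replace (A * / m * A + B * / m * B) with ((A ^ 2 + B ^ 2) * / m) by ring.
      rewrite <- Hm. field. exact Hm0. }
    rewrite <- Hproj at 1. apply Hdot. right.
    unfold Rdiv. replace ((A * / m) ^ 2 + (B * / m) ^ 2) with ((A ^ 2 + B ^ 2) * (/ m) ^ 2) by ring.
    rewrite <- Hm. field. exact Hm0.
Qed.

Lemma sum_f_R0_last (f : nat -> R) (n : nat) :
  (forall k, (k < n)%nat -> f k = 0) -> sum_f_R0 f n = f n.
Proof.
  destruct n as [|n]; intros Hf; [reflexivity|].
  rewrite tech5, sum_eq_R0; [ring|]. intros k Hk. apply Hf. lia.
Qed.

Lemma CSeries_drop_prefix (u : nat -> C) (v : nat -> R) (k : nat) :
  (forall n, Cmod (u n) <= v n) -> ex_series v -> (forall n, (n < k)%nat -> u n = 0%C) ->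
  CSeries u = (u k + CSeries (fun n => u (S k + n)%nat))%C.
Proof.
  intros Huv Hv Hpre.
  destruct (ex_series_Re_Im u v Huv Hv) as [HRe HIm].
  unfold CSeries.
  rewrite (Series_incr_n (fun n => Re (u n)) (S k)), (Series_incr_n (fun n => Im (u n)) (S k))
    by (lia || assumption).
  simpl pred. rewrite !sum_f_R0_last by (intros n Hn; rewrite Hpre by exact Hn; reflexivity).
  destruct (u k) as [x y]. reflexivity.
Qed.

Lemma pval_sub_leading_le (a : nat -> C) (delta : nat) :
  (forall n, (n < delta)%nat -> a n = 0%C) -> conv1 a ->
  exists rho A, 0 < rho /\ 0 <= A /\ forall z, Cmod z <= rho ->
    Cmod (pval a z - a delta * Cpow z delta)%C <= A * (Cmod z / rho) ^ S delta.
Proof.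
  intros Ha0 (rho & Hrho & Hex).
  set (tail := fun k => Cmod (a (S delta + k)%nat) * rho ^ (S delta + k)).
  assert (Htail : ex_series tail)
    by exact (proj1 (ex_series_incr_n (V := R_NormedModule) _ (S delta)) Hex).
  exists rho, (Series tail). split; [exact Hrho|split].
  { apply Series_nonneg; [|exact Htail]. intros k. unfold tail.
    apply Rmult_le_pos; [apply Cmod_ge_0|apply pow_le; lra]. }
  intros z Hz.
  set (u := fun n => (a n * Cpow z n)%C).
  assert (Hu : forall n, Cmod (u n) <= Cmod (a n) * rho ^ n).
  { intros n. unfold u. rewrite Cmod_mult, Cmod_pow.
    apply Rmult_le_compat_l; [apply Cmod_ge_0|apply pow_incr; split; [apply Cmod_ge_0|exact Hz]]. }
  unfold pval. fold u.
  rewrite (CSeries_drop_prefix u _ delta Hu Hex)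
    by (intros n Hn; unfold u; rewrite Ha0 by exact Hn; ring).
  replace (u delta + CSeries _ - a delta * Cpow z delta)%C
    with (CSeries (fun n => u (S delta + n)%nat)) by (unfold u; ring).
  rewrite Rmult_comm, <- Series_scal_l. apply Cmod_CSeries_le.
  - intros k. unfold u, tail. rewrite Cmod_mult, Cmod_pow, (pow_scale (Cmod z) rho) by exact Hrho.
    assert ((Cmod z / rho) ^ (S delta + k) <= (Cmod z / rho) ^ S delta).
    { apply pow_le_pow_exponent; [|lia]. split; [apply Rdiv_le_0_compat; [apply Cmod_ge_0|lra]|].
      apply Rmult_le_reg_r with rho; [lra|]. field_simplify; lra. }
    assert (0 <= Cmod (a (S delta + k)%nat) * rho ^ (S delta + k))
      by (apply Rmult_le_pos; [apply Cmod_ge_0|apply pow_le; lra]).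
    nra.
  - exact (ex_series_scal_l (V := R_NormedModule) _ _ Htail).
Qed.

Lemma pval_near_leading_term (a : nat -> C) (delta : nat) :
  (forall n, (n < delta)%nat -> a n = 0%C) -> conv1 a -> forall K, 0 < K ->
  at_right 0 (fun r => forall z, Cmod z <= r ->
    Cmod (pval a z - a delta * Cpow z delta)%C <= K * Cmod z ^ delta).
Proof.
  intros Ha0 Hconv K HK.
  destruct (pval_sub_leading_le a delta Ha0 Hconv) as (rho & A & Hrho & HA & Hp).
  assert (Hrd : 0 < rho ^ S delta) by (apply pow_lt; exact Hrho).
  apply (filter_imp (fun r => r <= rho /\ r <= K * rho ^ S delta / (A + 1))).
  2:{ apply filter_and; apply at_right_0_le; [exact Hrho|].
      apply Rdiv_lt_0_compat; [apply Rmult_lt_0_compat|]; lra. }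
  intros r (Hr1 & Hr2) z Hz.
  eapply Rle_trans; [apply Hp; lra|].
  assert (Ht : Cmod z * A <= K * rho ^ S delta).
  { apply Rle_trans with (Cmod z * (A + 1)); [pose proof (Cmod_ge_0 z); nra|].
    apply Rmult_le_reg_r with (/ (A + 1)); [apply Rinv_0_lt_compat; lra|].
    field_simplify; lra. }
  replace (A * (Cmod z / rho) ^ S delta)
    with (Cmod z ^ delta * (Cmod z * A / rho ^ S delta))
    by (unfold Rdiv; rewrite Rpow_mult_distr, pow_inv; simpl; ring).
  rewrite (Rmult_comm K). apply Rmult_le_compat_l; [apply pow_le, Cmod_ge_0|].
  apply Rmult_le_reg_r with (rho ^ S delta); [exact Hrd|]. field_simplify; lra.
Qed.

Lemma qval_le_of_monomial_le (b : nat -> nat -> C) :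
  conv2 b -> exists rho M, 0 < rho /\ 0 < M /\ forall z w Th, 0 <= Th ->
    (forall i j, b i j <> 0%C -> (Cmod z / rho) ^ i * (Cmod w / rho) ^ j <= Th) ->
    Cmod (qval b z w) <= M * Th.
Proof.
  intros (rho & Hrho & Hrow & Hsum).
  set (weight := fun i j => Cmod (b i j) * rho ^ i * rho ^ j).
  assert (Hweight : forall i j, 0 <= weight i j)
    by (intros i j; apply Rmult_le_pos; [apply Rmult_le_pos; [apply Cmod_ge_0|]|];
        apply pow_le; lra).
  set (S := Series (fun i => Series (weight i))).
  assert (HS : 0 <= S)
    by (apply Series_nonneg; [intros i; apply Series_nonneg; [apply Hweight|apply Hrow]|
                              exact Hsum]).
  exists rho, (S + 1). split; [exact Hrho|split; [lra|]].
  intros z w Th HTh Hmono.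
  apply Rle_trans with (Th * S); [|nra].
  unfold qval, S. rewrite <- Series_scal_l.
  apply Cmod_CSeries_le; [|exact (ex_series_scal_l (V := R_NormedModule) _ _ Hsum)].
  intros i. rewrite <- Series_scal_l.
  apply Cmod_CSeries_le; [|exact (ex_series_scal_l (V := R_NormedModule) _ _ (Hrow i))].
  intros j. rewrite !Cmod_mult, !Cmod_pow.
  destruct (classic (b i j = 0%C)) as [Hb|Hb].
  { unfold weight. rewrite Hb, Cmod_0. lra. }
  rewrite (pow_scale (Cmod z) rho i), (pow_scale (Cmod w) rho j) by exact Hrho.
  specialize (Hmono i j Hb). specialize (Hweight i j). unfold weight in *.
  replace (Cmod (b i j) * (rho ^ i * (Cmod z / rho) ^ i) * (rho ^ j * (Cmod w / rho) ^ j))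
    with (Cmod (b i j) * rho ^ i * rho ^ j * ((Cmod z / rho) ^ i * (Cmod w / rho) ^ j)) by ring.
  rewrite (Rmult_comm Th). apply Rmult_le_compat_l; assumption.
Qed.

(** * Invariance of [U_plus] *)

Lemma monomial_le (alpha l tau sigma : R) (delta i j : nat) :
  0 < tau <= 1 -> 0 <= sigma <= Rpower tau l -> 0 <= l <= alpha ->
  alpha * (INR delta - INR j) <= INR i ->
  tau ^ i * sigma ^ j <= sigma ^ delta + Rpower tau l ^ delta * Rpower tau (alpha - l).
Proof.
  intros Htau Hsig Hl Hsupp.
  assert (Hsig1 : sigma <= 1) by (pose proof (Rpower_le_1 tau l Htau ltac:(lra)); lra).
  pose proof (Rpower_gt_0 tau l). pose proof (Rpower_gt_0 tau (alpha - l)).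
  assert (0 <= Rpower tau l ^ delta) by (apply pow_le; lra).
  destruct (Nat.le_gt_cases delta j) as [Hj|Hj].
  - assert (tau ^ i <= 1) by (apply (pow_le_pow_exponent tau 0 i); [lra|lia]).
    assert (sigma ^ j <= sigma ^ delta) by (apply pow_le_pow_exponent; [lra|exact Hj]).
    pose proof (pow_le tau i ltac:(lra)). pose proof (pow_le sigma j ltac:(lra)). nra.
  - assert (Hj1 : INR j + 1 <= INR delta) by (rewrite <- S_INR; apply le_INR; lia).
    assert (Htau_i : tau ^ i <= Rpower tau (alpha * (INR delta - INR j)))
      by (rewrite <- Rpower_pow by lra; apply Rpower_le_exponent; lra).
    assert (Hsig_j : sigma ^ j <= Rpower tau (l * INR j))
      by (rewrite <- Rpower_mult, Rpower_pow by apply Rpower_gt_0; apply pow_incr; lra).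
    apply Rle_trans with (Rpower tau (alpha * (INR delta - INR j)) * Rpower tau (l * INR j)).
    { apply Rmult_le_compat; try assumption; apply pow_le; lra. }
    rewrite <- Rpower_plus, <- (Rpower_pow delta (Rpower tau l)), Rpower_mult, <- Rpower_plus
      by apply Rpower_gt_0.
    assert (Rpower tau (alpha * (INR delta - INR j) + l * INR j)
            <= Rpower tau (l * INR delta + (alpha - l)))
      by (apply Rpower_le_exponent; [lra|nra]).
    pose proof (pow_le sigma delta ltac:(lra)). lra.
Qed.

Lemma rpow_Rpower (x l : R) : 0 < x -> rpow x l = Rpower x l.
Proof. intros Hx. unfold rpow. destruct (Req_EM_T x 0); [lra|reflexivity]. Qed.

Lemma U_plus_Cmod_pos (l r1 r2 : R) (z w : C) : U_plus l r1 r2 z w -> 0 < Cmod z.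
Proof.
  intros [_ Hw]. pose proof (Cmod_ge_0 z). pose proof (Cmod_ge_0 w).
  unfold rpow in Hw. destruct (Req_EM_T (Cmod z) 0); lra.
Qed.

Lemma Cmod_near_bounds (P L : C) :
  Cmod (P - L)%C <= Cmod L / 2 -> Cmod L / 2 <= Cmod P <= 3 / 2 * Cmod L.
Proof.
  intros H.
  pose proof (Cmod_triangle P (L - P)%C) as HL. pose proof (Cmod_triangle L (P - L)%C) as HP.
  replace (P + (L - P))%C with L in HL by ring. replace (L + (P - L))%C with P in HP by ring.
  replace (L - P)%C with (- (P - L))%C in HL by ring. rewrite Cmod_opp in HL. split; lra.
Qed.

Section Invariance.

Variables (a : nat -> C) (b : nat -> nat -> C) (delta : nat) (alpha l rho M : R).
Hypothesis Hdelta : (2 <= delta)%nat.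
Hypothesis Ha0 : forall n, (n < delta)%nat -> a n = 0%C.
Hypothesis Ha : a delta <> 0%C.
Hypothesis Hconv1 : conv1 a.
Hypothesis Hl : 0 < l.
Hypothesis Hla : l < alpha.
Hypothesis Hrho : 0 < rho.
Hypothesis HM : 0 < M.
Hypothesis Hsupport : forall i j, b i j <> 0%C -> alpha * (INR delta - INR j) <= INR i.
Hypothesis Hq : forall z w Th, 0 <= Th ->
  (forall i j, b i j <> 0%C -> (Cmod z / rho) ^ i * (Cmod w / rho) ^ j <= Th) ->
  Cmod (qval b z w) <= M * Th.

Let c0 := Cmod (a delta).
Let cl := Rpower (c0 / 2) l.

Lemma qval_le_in_U_plus (r2 : R) (z w : C) :
  0 < Cmod z <= rho -> 0 < r2 <= Rpower rho (1 - l) -> Cmod w < r2 * Rpower (Cmod z) l ->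
  Cmod (qval b z w) <= M * ((Cmod w / rho) ^ delta
    + Rpower (Cmod z / rho) l ^ delta * Rpower (Cmod z / rho) (alpha - l)).
Proof.
  intros Hz Hr2 Hw.
  set (tau := Cmod z / rho). set (sigma := Cmod w / rho).
  assert (Htau : 0 < tau <= 1).
  { unfold tau. split; [apply Rdiv_lt_0_compat; lra|].
    apply Rmult_le_reg_r with rho; [lra|]. field_simplify; lra. }
  assert (Hsigma : 0 <= sigma <= Rpower tau l).
  { split; [apply Rdiv_le_0_compat; [apply Cmod_ge_0|exact Hrho]|].
    assert (Hz_l : Rpower (Cmod z) l = Rpower tau l * Rpower rho l).
    { rewrite Rpower_mult_distr by lra. unfold tau. f_equal. field. lra. }
    assert (Hr2_l : r2 * Rpower rho l <= rho).
    { rewrite <- (Rpower_1 rho) at 2 by exact Hrho. replace 1 with ((1 - l) + l) by ring.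
      rewrite Rpower_plus. apply Rmult_le_compat_r; [left; apply Rpower_gt_0|lra]. }
    unfold sigma. apply Rmult_le_reg_r with rho; [exact Hrho|].
    pose proof (Rpower_gt_0 tau l). field_simplify; nra. }
  apply Hq.
  - pose proof (Rpower_gt_0 tau l). pose proof (Rpower_gt_0 tau (alpha - l)).
    pose proof (pow_le sigma delta ltac:(lra)).
    pose proof (pow_le (Rpower tau l) delta ltac:(lra)). nra.
  - intros i j Hb. apply monomial_le; [exact Htau|exact Hsigma|lra|exact (Hsupport i j Hb)].
Qed.

Lemma high_w_degree_term_le (r2 s u : R) :
  0 < r2 <= 1 -> r2 <= cl * rho ^ delta / (3 * M) -> 0 <= s <= r2 * u -> 0 <= u ->
  M * (s / rho) ^ delta <= r2 * cl * u ^ delta / 3.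
Proof.
  intros Hr2 Hr2M Hs Hu.
  assert (HMr2 : M * r2 <= cl * rho ^ delta / 3).
  { replace (cl * rho ^ delta / 3) with (M * (cl * rho ^ delta / (3 * M))) by (field; lra).
    apply Rmult_le_compat_l; lra. }
  assert (Hrd : 0 < rho ^ delta) by (apply pow_lt; exact Hrho).
  assert (Hsd : (s / rho) ^ delta <= r2 ^ delta * (u ^ delta / rho ^ delta)).
  { unfold Rdiv. rewrite <- pow_inv, <- !Rpow_mult_distr.
    apply pow_incr. split; [apply Rmult_le_pos; [lra|left; apply Rinv_0_lt_compat; lra]|].
    rewrite <- Rmult_assoc. apply Rmult_le_compat_r; [left; apply Rinv_0_lt_compat; lra|lra]. }
  assert (Hr2d : r2 ^ delta <= r2 * r2)
    by (replace (r2 * r2) with (r2 ^ 2) by ring; apply pow_le_pow_exponent; [lra|exact Hdelta]).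
  assert (Hratio : 0 <= u ^ delta / rho ^ delta) by (apply Rdiv_le_0_compat; [apply pow_le|]; lra).
  apply Rle_trans with (r2 * (M * r2) * (u ^ delta / rho ^ delta)).
  { replace (r2 * (M * r2) * (u ^ delta / rho ^ delta))
      with (M * (r2 * r2 * (u ^ delta / rho ^ delta))) by ring.
    apply Rmult_le_compat_l; [lra|]. nra. }
  apply Rle_trans with (r2 * (cl * rho ^ delta / 3) * (u ^ delta / rho ^ delta)).
  { apply Rmult_le_compat_r; [exact Hratio|]. apply Rmult_le_compat_l; lra. }
  right. field. lra.
Qed.

Lemma low_w_degree_term_le (r1 r2 t : R) :
  0 < t < r1 -> Rpower (r1 / rho) (alpha - l) <= r2 * cl * Rpower rho l ^ delta / (3 * M) ->
  M * (Rpower (t / rho) l ^ delta * Rpower (t / rho) (alpha - l))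
    <= r2 * cl * Rpower t l ^ delta / 3.
Proof.
  intros Ht Hr1M.
  assert (Htl : Rpower (t / rho) l * Rpower rho l = Rpower t l)
    by (rewrite Rpower_mult_distr by (try apply Rdiv_lt_0_compat; lra); f_equal; field; lra).
  assert (Hrl : 0 < Rpower rho l ^ delta) by (apply pow_lt, Rpower_gt_0).
  assert (Hgap : Rpower (t / rho) (alpha - l) <= Rpower (r1 / rho) (alpha - l)).
  { apply Rle_Rpower_l; [lra|]. split; [apply Rdiv_lt_0_compat; lra|].
    apply Rmult_le_compat_r; [left; apply Rinv_0_lt_compat|]; lra. }
  rewrite <- Htl, Rpow_mult_distr.
  pose proof (pow_le (Rpower (t / rho) l) delta (Rlt_le _ _ (Rpower_gt_0 _ _))).
  apply Rle_trans
    with (M * (Rpower (t / rho) l ^ delta * (r2 * cl * Rpower rho l ^ delta / (3 * M)))).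
  { apply Rmult_le_compat_l; [lra|]. apply Rmult_le_compat_l; lra. }
  right. field. lra.
Qed.

Lemma U_plus_invariant (r1 r2 : R) :
  0 < r2 <= 1 -> r2 <= Rpower rho (1 - l) -> r2 <= cl * rho ^ delta / (3 * M) ->
  r1 <= 1 -> r1 <= rho -> r1 <= 2 / (3 * c0) ->
  (forall z, Cmod z <= r1 ->
     Cmod (pval a z - a delta * Cpow z delta)%C <= c0 / 2 * Cmod z ^ delta) ->
  Rpower (r1 / rho) (alpha - l) <= r2 * cl * Rpower rho l ^ delta / (3 * M) ->
  forall z w, U_plus l r1 r2 z w -> U_plus l r1 r2 (pval a z) (qval b z w).
Proof.
  intros Hr2 Hr2rho Hr2M Hr1 Hr1rho Hr1c0 Hp Hr1M z w HU.
  pose proof (U_plus_Cmod_pos _ _ _ _ _ HU) as Ht.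
  destruct HU as [Hz Hw]. rewrite rpow_Rpower in Hw by exact Ht.
  assert (Hc0 : 0 < c0) by (apply Cmod_gt_0; exact Ha).
  assert (Hlead : Cmod (a delta * Cpow z delta)%C = c0 * Cmod z ^ delta)
    by (rewrite Cmod_mult, Cmod_pow; reflexivity).
  assert (Hnear : Cmod (pval a z - a delta * Cpow z delta)%C <= Cmod (a delta * Cpow z delta)%C / 2)
    by (rewrite Hlead; specialize (Hp z (Rlt_le _ _ Hz)); lra).
  destruct (Cmod_near_bounds _ _ Hnear) as [Plo Phi]. rewrite Hlead in Plo, Phi.
  assert (Htd : 0 < Cmod z ^ delta) by (apply pow_lt; exact Ht).
  split.
  { eapply Rle_lt_trans; [exact Phi|]. rewrite <- Rmult_assoc.
    apply mul_pow_lt; try lra; [|exact Hdelta].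
    replace 1 with (3 / 2 * c0 * (2 / (3 * c0))) by (field; lra).
    apply Rmult_le_compat_l; lra. }
  rewrite rpow_Rpower by nra.
  assert (Hlow : cl * Rpower (Cmod z) l ^ delta <= Rpower (Cmod (pval a z)) l).
  { unfold cl. rewrite <- Rpower_pow_comm, Rpower_mult_distr by lra.
    apply Rle_Rpower_l; [lra|split; [nra|lra]]. }
  pose proof (qval_le_in_U_plus r2 z w ltac:(lra) ltac:(lra) Hw) as HQ.
  pose proof (low_w_degree_term_le r1 r2 (Cmod z) (conj Ht Hz) Hr1M) as Hlow_terms.
  set (u := Rpower (Cmod z) l) in *.
  pose proof (high_w_degree_term_le r2 (Cmod w) u Hr2 Hr2M (conj (Cmod_ge_0 w) (Rlt_le _ _ Hw))
                (Rlt_le _ _ (Rpower_gt_0 _ _))) as Hhigh_terms.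
  assert (Hpos : 0 < cl * u ^ delta)
    by (apply Rmult_lt_0_compat; [apply Rpower_gt_0|apply pow_lt, Rpower_gt_0]).
  assert (Htarget : r2 * (cl * u ^ delta) <= r2 * Rpower (Cmod (pval a z)) l)
    by (apply Rmult_le_compat_l; lra).
  rewrite Rmult_plus_distr_l in HQ. nra.
Qed.

Lemma exists_U_plus_invariant (eps : R) : 0 < eps ->
  exists r1 r2, 0 < r1 < eps /\ 0 < r2 < eps /\
    forall z w, U_plus l r1 r2 z w -> U_plus l r1 r2 (pval a z) (qval b z w).
Proof.
  intros Heps.
  assert (Hc0 : 0 < c0) by (apply Cmod_gt_0; exact Ha).
  assert (Hcl : 0 < cl) by apply Rpower_gt_0.
  destruct (at_right_0_witness (fun r2 => r2 <= eps / 2 /\ r2 <= 1 /\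
      r2 <= Rpower rho (1 - l) /\ r2 <= cl * rho ^ delta / (3 * M)))
    as (r2 & Hr2 & Hr2eps & Hr21 & Hr2rho & Hr2M).
  { repeat apply filter_and; apply at_right_0_le; [lra|lra|apply Rpower_gt_0|].
    apply Rdiv_lt_0_compat; [apply Rmult_lt_0_compat; [exact Hcl|apply pow_lt]|]; lra. }
  destruct (at_right_0_witness (fun r1 => r1 <= eps / 2 /\ r1 <= 1 /\ r1 <= rho /\
      r1 <= 2 / (3 * c0) /\
      (forall z, Cmod z <= r1 ->
         Cmod (pval a z - a delta * Cpow z delta)%C <= c0 / 2 * Cmod z ^ delta) /\
      Rpower (r1 / rho) (alpha - l) <= r2 * cl * Rpower rho l ^ delta / (3 * M)))
    as (r1 & Hr1 & Hr1eps & Hr11 & Hr1rho & Hr1c0 & Hp & Hr1M).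
  { repeat apply filter_and;
      [apply at_right_0_le; lra|apply at_right_0_le; lra|apply at_right_0_le; lra
      |apply at_right_0_le, Rdiv_lt_0_compat; lra
      |apply pval_near_leading_term; [exact Ha0|exact Hconv1|lra]
      |apply at_right_0_Rpower_le; [exact Hrho|lra|]].
    apply Rdiv_lt_0_compat; [|lra].
    apply Rmult_lt_0_compat; [apply Rmult_lt_0_compat; lra|apply pow_lt, Rpower_gt_0]. }
  exists r1, r2. split; [lra|split; [lra|]].
  exact (U_plus_invariant r1 r2 (conj Hr2 Hr21) Hr2rho Hr2M Hr11 Hr1rho Hr1c0 Hp Hr1M).
Qed.

End Invariance.

Theorem theorem2p13
  (a : nat -> C) (delta : nat) (b : nat -> nat -> C) (gamma d : nat) :
  (* p(z) = a_delta z^delta + O(z^{delta+1}), a_delta <> 0, delta >= 2, holomorphic near 0 *)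
  (2 <= delta)%nat ->
  (forall n, (n < delta)%nat -> a n = 0%C) ->
  a delta <> 0%C ->
  conv1 a ->
  (* q(z,w) = sum b_ij z^i w^j holomorphic near 0, b_00 = b_01 = 0 *)
  conv2 b ->
  b 0%nat 0%nat = 0%C ->
  b 0%nat 1%nat = 0%C ->
  (* Case 4, with (gamma, d) = (n_k, m_k) *)
  case4_vertex b delta gamma d ->
  let alpha := INR gamma / (INR delta - INR d) in
  forall l : R, 0 < l -> l < alpha ->
  forall eps : R, 0 < eps ->
  exists r1 r2 : R, 0 < r1 < eps /\ 0 < r2 < eps /\
    forall z w : C, U_plus l r1 r2 z w ->
      U_plus l r1 r2 (pval a z) (qval b z w).
Proof.
  (* [b 0 0 = 0] and [b 0 1 = 0] are not needed: Case 4 forces [i >= alpha * (delta - j) > 0]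
     for every monomial with [j < delta]. *)
  intros Hd2 Ha0 Ha Hconv1 Hconv2 _ _ H4 alpha l Hl Hla eps Heps.
  assert (Halpha : 0 < alpha) by lra.
  pose proof (case4_supporting_line b delta gamma d H4 Halpha) as Hsupp.
  destruct (qval_le_of_monomial_le b Hconv2) as (rho & M & Hrho & HM & Hq).
  exact (exists_U_plus_invariant a b delta alpha l rho M
           Hd2 Ha0 Ha Hconv1 Hl Hla Hrho HM Hsupp Hq eps Heps).
Qed.
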